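(* Let $0<\lambda<\frac{5-\sqrt{21}}{2}$ and let $K$ be the attractor of the IFS $f_1(x)=\lambda x$, $f_2(x)=\lambda x+2\lambda$, $f_3(x)=\lambda x+3\lambda-\lambda^2$, $f_4(x)=\lambda x+1-\lambda$. Then $U_{2i+1}=\emptyset$ for every integer $i\ge1$.
   Context: A coding of $x\in K$ is a sequence $(i_n)\in\{1,2,3,4\}^{\mathbb{N}}$ with $x=\lim_{n\to\infty}f_{i_1}\circ\cdots\circ f_{i_n}(0)$. $U_k$ denotes the set of $x\in K$ having exactly $k$ distinct codings. *)

From Stdlib Require Import Reals List.
Open Scope R_scope.

Inductive digit : Type := D1 | D2 | D3 | D4.

Definition ifs_map (lam : R) (d : digit) (x : R) : R :=
  match d with
  | D1 => lam * x
  | D2 => lam * x + 2 * lam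
  | D3 => lam * x + 3 * lam - lam ^ 2
  | D4 => lam * x + 1 - lam
  end.

(* comp lam c n x = f_{c 0} o f_{c 1} o ... o f_{c (n-1)} (x) *)
Fixpoint comp (lam : R) (c : nat -> digit) (n : nat) (x : R) : R :=
  match n with
  | O => x
  | S m => comp lam c m (ifs_map lam (c m) x)
  end.

Definition is_coding (lam : R) (x : R) (c : nat -> digit) : Prop :=
  Un_cv (fun n => comp lam c n 0) x.

Definition in_attractor (lam : R) (x : R) : Prop :=
  exists c, is_coding lam x c.

Definition in_U (lam : R) (k : nat) (x : R) : Prop :=
  in_attractor lam x /\
  exists l : list (nat -> digit),
    length l = k /\ NoDup l /\ (forall c, is_coding lam x c <-> In c l).

(* Only f_2(K) and f_3(K) overlap, in [3 lam - lam^2, 3 lam], and a coding of a point of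
   this overlap begins with the block 24 or 31.  Since f_2 o f_4 = f_3 o f_1, exchanging such
   a block turns a coding into another coding of the same point.  If x has two codings, let k
   be the first index at which two of its codings differ: all codings agree before k, so
   their k-tails code one and the same point of the overlap, and exchanging the block at k is
   a fixed-point-free involution on the codings of x.  Hence finitely many codings come in
   pairs. *)

From Stdlib Require Import Reals Lra Lia List Wf_nat Classical FunctionalExtensionality.
Open Scope R_scope.

Lemma Un_cv_eventually_eq (u v : nat -> R) (l : R) (N : nat) :
  (forall n, (N <= n)%nat -> v n = u n) -> Un_cv u l -> Un_cv v l.
Proof.
  intros Huv Hu eps Heps. destruct (Hu eps Heps) as [M HM].
  exists (Nat.max N M). intros n Hn. rewrite Huv by lia. apply HM. lia.
Qed.

Lemma Un_cv_const (c : R) : Un_cv (fun _ => c) c.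
Proof. intros eps Heps. exists 0%nat. intros n _. unfold Rdist. rewrite Rminus_diag, Rabs_R0. exact Heps. Qed.

Lemma Un_cv_affine (u : nat -> R) (l a b : R) :
  Un_cv u l -> Un_cv (fun n => a * u n + b) (a * l + b).
Proof.
  intro Hu. apply CV_plus; [apply CV_mult|]; auto using Un_cv_const.
Qed.

Lemma involution_even_length {A : Type} (s : A -> A) (l : list A) :
  NoDup l -> (forall c, In c l -> In (s c) l /\ s (s c) = c /\ s c <> c) ->
  Nat.Even (length l).
Proof.
  remember (length l) as n eqn:Hn. revert l Hn.
  induction n as [n IH] using (well_founded_induction lt_wf).
  intros [|c l] Hn Hnd Hs; [exists 0%nat; simpl in *; lia|].
  destruct (Hs c (or_introl eq_refl)) as [[Hsc|Hsc] [Hssc Hne]]; [congruence|].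
  apply in_split in Hsc as [l1 [l2 ->]].
  apply NoDup_cons_iff in Hnd as [Hc Hnd].
  apply NoDup_remove in Hnd as [Hnd Hsc].
  assert (Hin : forall d, In d (l1 ++ l2) -> In d (c :: l1 ++ s c :: l2)).
  { intros d Hd. right. apply in_app_iff in Hd as [Hd|Hd]; apply in_app_iff; simpl; auto. }
  assert (Heven : Nat.Even (length (l1 ++ l2))).
  { simpl in Hn. rewrite length_app in Hn. simpl in Hn.
    apply (IH (length (l1 ++ l2)) ltac:(rewrite length_app; lia) _ eq_refl Hnd).
    intros d Hd. destruct (Hs d (Hin d Hd)) as [[E|E] [Hssd Hsd]]; split; auto.
    - exfalso. apply Hsc. rewrite E, Hssd. exact Hd.
    - apply in_app_iff in E as [E|[E|E]]; apply in_app_iff; auto.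
      assert (d = c) as -> by (rewrite <- Hssd, <- E; exact Hssc).
      exfalso. apply Hc, in_app_iff. apply in_app_iff in Hd as [Hd|Hd]; simpl; auto. }
  rewrite Hn. simpl. rewrite length_app in *. simpl.
  rewrite Nat.add_succ_r. apply Nat.Even_succ_succ. exact Heven.
Qed.

Lemma first_branching_index {A : Type} (S : (nat -> A) -> Prop) (c1 c2 : nat -> A) :
  S c1 -> S c2 -> c1 <> c2 ->
  exists k, (forall a b, S a -> S b -> forall j, (j < k)%nat -> a j = b j) /\
            exists a b, S a /\ S b /\ a k <> b k.
Proof.
  intros H1 H2 Hne.
  set (branches n := exists a b, S a /\ S b /\ a n <> b n).
  assert (Hex : exists n, branches n).
  { apply NNPP. intro Hno. apply Hne, functional_extensionality. intro n.
    apply NNPP. intro E. apply Hno. exists n, c1, c2. auto. }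
  destruct (dec_inh_nat_subset_has_unique_least_element branches (fun n => classic _) Hex)
    as [k [[Hk Hleast] _]].
  exists k. split; [|exact Hk].
  intros a b Ha Hb j Hj. apply NNPP. intro E.
  assert (k <= j)%nat by (apply Hleast; exists a, b; auto). lia.
Qed.

Definition coding_tail (c : nat -> digit) (k : nat) : nat -> digit := fun n => c (k + n)%nat.

Section Codings.

Variable lam : R.
Hypothesis lam_pos : 0 < lam.

Definition ifs_offset (d : digit) : R :=
  match d with D1 => 0 | D2 => 2 * lam | D3 => 3 * lam - lam ^ 2 | D4 => 1 - lam end.

Lemma ifs_map_affine (d : digit) (z : R) : ifs_map lam d z = lam * z + ifs_offset d.
Proof. destruct d; simpl; ring. Qed.

Lemma ifs_map_inj (d : digit) (z z' : R) : ifs_map lam d z = ifs_map lam d z' -> z = z'.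
Proof. rewrite !ifs_map_affine. intro E. apply (Rmult_eq_reg_l lam); lra. Qed.

Lemma comp_succ_tail (c : nat -> digit) (n : nat) (z : R) :
  comp lam c (S n) z = ifs_map lam (c 0%nat) (comp lam (coding_tail c 1) n z).
Proof.
  revert z; induction n as [|n IH]; intro z; [reflexivity|].
  change (comp lam c (S n) (ifs_map lam (c (S n)) z) =
          ifs_map lam (c 0%nat) (comp lam (coding_tail c 1) n (ifs_map lam (c (S n)) z))).
  apply IH.
Qed.

Lemma comp_ext (a b : nat -> digit) (k : nat) (z : R) :
  (forall j, (j < k)%nat -> a j = b j) -> comp lam a k z = comp lam b k z.
Proof.
  revert z; induction k as [|k IH]; intros z Hab; [reflexivity|].
  simpl. rewrite Hab by lia. apply IH. intros j Hj. apply Hab. lia.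
Qed.

Lemma comp_inj (c : nat -> digit) (k : nat) (z z' : R) :
  comp lam c k z = comp lam c k z' -> z = z'.
Proof.
  revert z z'; induction k as [|k IH]; intros z z' E; [exact E|].
  apply (ifs_map_inj (c k)), IH, E.
Qed.

Lemma is_coding_tail1 (x : R) (c : nat -> digit) :
  is_coding lam x c ->
  exists z, is_coding lam z (coding_tail c 1) /\ x = ifs_map lam (c 0%nat) z.
Proof.
  intro Hc. exists (/ lam * x + - ifs_offset (c 0%nat) / lam). split.
  - apply (Un_cv_eventually_eq (fun n => / lam * comp lam c (n + 1) 0 + - ifs_offset (c 0%nat) / lam) _ _ 0).
    + intros n _. rewrite Nat.add_1_r, comp_succ_tail, ifs_map_affine. field. lra.
    + apply Un_cv_affine, (CV_shift' (fun n => comp lam c n 0)), Hc.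
  - rewrite ifs_map_affine. field. lra.
Qed.

Lemma is_coding_tail (x : R) (c : nat -> digit) (k : nat) :
  is_coding lam x c -> exists y, is_coding lam y (coding_tail c k) /\ x = comp lam c k y.
Proof.
  revert x c; induction k as [|k IH]; intros x c Hc; [exists x; auto|].
  destruct (is_coding_tail1 x c Hc) as [z [Hz ->]].
  destruct (IH z (coding_tail c 1) Hz) as [y [Hy ->]].
  exists y. split; [exact Hy|]. symmetry. apply comp_succ_tail.
Qed.

Lemma is_coding_tail_eq (x y y' : R) (a b : nat -> digit) (k : nat) :
  is_coding lam x a -> is_coding lam x b -> (forall j, (j < k)%nat -> a j = b j) ->
  is_coding lam y (coding_tail a k) -> is_coding lam y' (coding_tail b k) -> y = y'.
Proof.
  intros Ha Hb Hab Hy Hy'.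
  destruct (is_coding_tail x a k Ha) as [z [Hz Ex]].
  destruct (is_coding_tail x b k Hb) as [z' [Hz' Ex']].
  rewrite (UL_sequence _ _ _ Hy Hz), (UL_sequence _ _ _ Hy' Hz').
  apply (comp_inj a k). rewrite <- Ex, Ex'. apply comp_ext. intros j Hj. symmetry. auto.
Qed.

End Codings.

Section Overlap.

Variable lam : R.
Hypothesis lam_pos : 0 < lam.
Hypothesis lam_lt_1 : lam < 1.
Hypothesis lam_sep : lam ^ 2 - 5 * lam + 1 > 0.

Lemma lam_lt_quarter : lam < 1 / 4.
Proof. nra. Qed.

Lemma ifs_map_unit_interval (d : digit) (z : R) :
  0 <= z <= 1 -> 0 <= ifs_map lam d z <= 1.
Proof. pose proof lam_lt_quarter. intro Hz. destruct d; simpl; nra. Qed.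

Lemma coding_unit_interval (x : R) (c : nat -> digit) :
  is_coding lam x c -> 0 <= x <= 1.
Proof.
  intro Hc.
  assert (Hcomp : forall n z, 0 <= z <= 1 -> 0 <= comp lam c n z <= 1).
  { induction n as [|n IH]; intros z Hz; [exact Hz|]. apply IH, ifs_map_unit_interval, Hz. }
  split.
  - refine (Rle_cv_lim _ (Un_cv_const 0) Hc). intro n. apply Hcomp. lra.
  - refine (Rle_cv_lim _ Hc (Un_cv_const 1)). intro n. apply Hcomp. lra.
Qed.

Definition in_overlap (y : R) : Prop := 3 * lam - lam ^ 2 <= y <= 3 * lam.

Lemma is_coding_head (y : R) (c : nat -> digit) :
  is_coding lam y c ->
  exists z, 0 <= z <= 1 /\ is_coding lam z (coding_tail c 1) /\ y = ifs_map lam (c 0%nat) z.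
Proof.
  intro Hc. destruct (is_coding_tail1 lam lam_pos y c Hc) as [z [Hz Ey]].
  exists z. split; [apply (coding_unit_interval z (coding_tail c 1) Hz)|auto].
Qed.

Lemma codings_head_neq_overlap (y : R) (a b : nat -> digit) :
  is_coding lam y a -> is_coding lam y b -> a 0%nat <> b 0%nat -> in_overlap y.
Proof.
  pose proof lam_lt_quarter. intros Ha Hb Hab. unfold in_overlap.
  destruct (is_coding_head y a Ha) as [z [Hz [_ ->]]].
  destruct (is_coding_head _ b Hb) as [z' [Hz' [_ E]]].
  destruct (a 0%nat), (b 0%nat); simpl in *; try congruence; nra.
Qed.

Definition block_at (c : nat -> digit) (k : nat) : Prop :=
  (c k = D2 /\ c (S k) = D4) \/ (c k = D3 /\ c (S k) = D1).

Lemma overlap_coding_block (y : R) (c : nat -> digit) :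
  in_overlap y -> is_coding lam y c -> block_at c 0.
Proof.
  pose proof lam_lt_quarter. unfold in_overlap, block_at. intros Hy Hc.
  destruct (is_coding_head y c Hc) as [z [Hz [Hcz ->]]].
  destruct (is_coding_head z _ Hcz) as [w [Hw [_ ->]]].
  change (coding_tail c 1 0) with (c 1%nat) in *.
  destruct (c 0%nat), (c 1%nat); simpl in *; auto; exfalso; nra.
Qed.

Lemma distinct_codings_common_block (x : R) (c1 c2 : nat -> digit) :
  is_coding lam x c1 -> is_coding lam x c2 -> c1 <> c2 ->
  exists k, forall c, is_coding lam x c -> block_at c k.
Proof.
  intros H1 H2 Hne.
  destruct (first_branching_index (is_coding lam x) c1 c2 H1 H2 Hne)
    as [k [Hagree [a [b [Ha [Hb Hab]]]]]].
  destruct (is_coding_tail lam lam_pos x a k Ha) as [y [Hya _]].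
  assert (Htail : forall c, is_coding lam x c -> is_coding lam y (coding_tail c k)).
  { intros c Hc. destruct (is_coding_tail lam lam_pos x c k Hc) as [y' [Hy' _]].
    rewrite (is_coding_tail_eq lam lam_pos x y y' a c k Ha Hc (Hagree a c Ha Hc) Hya Hy').
    exact Hy'. }
  assert (Hy : in_overlap y).
  { apply (codings_head_neq_overlap y
             (coding_tail a k) (coding_tail b k) Hya (Htail b Hb)).
    unfold coding_tail. rewrite Nat.add_0_r. exact Hab. }
  exists k. intros c Hc.
  pose proof (overlap_coding_block y _ Hy (Htail c Hc)) as B.
  unfold block_at, coding_tail in B. rewrite Nat.add_0_r, Nat.add_1_r in B. exact B.
Qed.

End Overlap.

Definition swap_block (k : nat) (c : nat -> digit) : nat -> digit := fun n =>
  if Nat.eqb n k then (match c k with D2 => D3 | _ => D2 end)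
  else if Nat.eqb n (S k) then (match c k with D2 => D1 | _ => D4 end)
  else c n.

Lemma swap_block_at (k : nat) (c : nat -> digit) :
  block_at c k ->
  (c k = D2 /\ c (S k) = D4 /\ swap_block k c k = D3 /\ swap_block k c (S k) = D1) \/
  (c k = D3 /\ c (S k) = D1 /\ swap_block k c k = D2 /\ swap_block k c (S k) = D4).
Proof.
  unfold swap_block. rewrite Nat.eqb_refl.
  destruct (Nat.eqb_spec (S k) k); [lia|]. rewrite Nat.eqb_refl.
  intros [[-> ->]|[-> ->]]; auto.
Qed.

Lemma swap_block_other (k n : nat) (c : nat -> digit) :
  n <> k -> n <> S k -> swap_block k c n = c n.
Proof.
  intros H1 H2. unfold swap_block.
  destruct (Nat.eqb_spec n k); [lia|]. destruct (Nat.eqb_spec n (S k)); [lia|]. reflexivity.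
Qed.

Lemma swap_block_involutive (k : nat) (c : nat -> digit) :
  block_at c k -> swap_block k (swap_block k c) = c.
Proof.
  intro B. apply functional_extensionality. intro n. unfold swap_block. rewrite !Nat.eqb_refl.
  destruct (Nat.eqb_spec n k) as [->|]; [destruct B as [[-> _]|[-> _]]; reflexivity|].
  destruct (Nat.eqb_spec n (S k)) as [->|]; [|reflexivity].
  destruct B as [[-> ->]|[-> ->]]; reflexivity.
Qed.

Lemma swap_block_neq (k : nat) (c : nat -> digit) :
  block_at c k -> swap_block k c <> c.
Proof.
  intros B E. destruct (swap_block_at k c B) as [[E1 [_ [E2 _]]]|[E1 [_ [E2 _]]]];
    rewrite E in E2; congruence.
Qed.

Lemma ifs_map_D2_D4 (lam z : R) :
  ifs_map lam D2 (ifs_map lam D4 z) = ifs_map lam D3 (ifs_map lam D1 z).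
Proof. simpl. ring. Qed.

Lemma comp_swap_block (lam : R) (k : nat) (c : nat -> digit) (n : nat) (z : R) :
  block_at c k -> (k + 2 <= n)%nat -> comp lam (swap_block k c) n z = comp lam c n z.
Proof.
  intro B. revert z; induction n as [|n IH]; intros z Hn; [lia|].
  destruct (Nat.eq_dec n (S k)) as [->|Hne].
  - simpl. rewrite (comp_ext lam _ c) by (intros j Hj; apply swap_block_other; lia).
    f_equal. destruct (swap_block_at k c B) as [[-> [-> [-> ->]]]|[-> [-> [-> ->]]]];
      [symmetry|]; apply ifs_map_D2_D4.
  - simpl. rewrite swap_block_other by lia. apply IH. lia.
Qed.

Lemma is_coding_swap_block (lam x : R) (k : nat) (c : nat -> digit) :
  block_at c k -> is_coding lam x c -> is_coding lam x (swap_block k c).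
Proof.
  intros B. apply (Un_cv_eventually_eq _ _ x (k + 2)).
  intros n Hn. apply comp_swap_block; auto.
Qed.

Lemma below_lower_root (lam : R) :
  0 < lam -> lam < (5 - sqrt 21) / 2 -> lam < 1 /\ lam ^ 2 - 5 * lam + 1 > 0.
Proof.
  intros H0 H1.
  assert (Hsq : sqrt 21 * sqrt 21 = 21) by (apply sqrt_sqrt; lra).
  assert (Hpos : 0 <= sqrt 21) by apply sqrt_pos.
  assert (4 < sqrt 21) by nra.
  split; nra.
Qed.

Theorem lemma2p30 (lam : R) (hlam0 : 0 < lam) (hlam1 : lam < (5 - sqrt 21) / 2) :
  forall i : nat, (1 <= i)%nat -> forall x : R, ~ in_U lam (2 * i + 1) x.
Proof.
  intros i Hi x [_ [l [Hlen [Hnd Hcodings]]]].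
  destruct (below_lower_root lam hlam0 hlam1) as [lam_lt_1 lam_sep].
  destruct l as [|c1 [|c2 l]]; simpl in Hlen; try lia.
  assert (Hne : c1 <> c2) by (intros ->; apply NoDup_cons_iff in Hnd; firstorder).
  destruct (distinct_codings_common_block lam hlam0 lam_lt_1 lam_sep x c1 c2)
    as [k Hblock]; try (apply Hcodings; simpl; auto); auto.
  assert (Heven : Nat.Even (length (c1 :: c2 :: l))).
  { apply (involution_even_length (swap_block k)); auto.
    intros c Hc. apply Hcodings in Hc. pose proof (Hblock c Hc) as B.
    repeat split; auto using swap_block_involutive, swap_block_neq.
    apply Hcodings, is_coding_swap_block; auto. }
  simpl in Heven. destruct Heven as [m Hm]. lia.
Qed.
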